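(* There is a constant $c$ such that for every $i\in\mathbb{N}$ there is a monadic second order (MSO) formula $\xi_i(X)$ over the vocabulary $\{Oc,\overline{Oc},Cl,Lt,U,B_\Box,D_\Diamond\}\cup\{Lv_j : j\ge 0\}$, with one free set variable $X$ and of length at most $c(i+1)$, with the following property. For every modal CNF formula $\phi$ with $\mathrm{md}(\phi)\ge i$ and every set $C$ of domain elements of $\mathcal{S}(\phi)$ that represent clauses at level $i$ of $\phi$, the formula $\mathrm{CNF}(C)$ is satisfiable (at some world of some Kripke model, with no restriction on the accessibility relation) if and only if $\mathcal{S}(\phi)\models \xi_i(C)$.
   Context: Modal formulas are built from propositional variables, $\bot$, $\neg$, $\lor$, $\Diamond$, $\Box$, and are evaluated in Kripke models $(W,\mapsto,V)$ in the standard way. A formula is satisfiable if it holds at some world of some Kripke model. The modal depth $\mathrm{md}$ is defined by: $\mathrm{md}(q)=\mathrm{md}(\bot)=0$, $\mathrm{md}(\neg\phi)=\mathrm{md}(\phi)$, $\mathrm{md}(\phi\lor\psi)=\max(\mathrm{md}(\phi),\mathrm{md}(\psi))$, $\mathrm{md}(\Diamond\phi)=\mathrm{md}(\Box\phi)=\mathrm{md}(\phi)+1$. Modal CNF: literal ::= $q$ | $\neg q$ | $\Box$clause | $\Diamond$CNF; clause ::= literal | clause $\lor$ clause | $\bot$; CNF ::= clause | CNF $\wedge$ CNF, where $q$ ranges over propositional variables. It is assumed that $\bot$ occurs only inside subformulas of the form $\Box\bot$. Levels: if $\phi=\mathrm{clause}_1\wedge\dots\wedge\mathrm{clause}_m$,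 these clauses and all literals occurring in them (directly, as disjuncts) are at level $\mathrm{md}(\phi)$. If $\Box\,\mathrm{clause}_1$ is a literal at level $i$, then $\mathrm{clause}_1$ and its literals are at level $i-1$. If $\Diamond(\mathrm{clause}_1\wedge\dots\wedge\mathrm{clause}_{m'})$ is a literal at level $i$, these clauses and their literals are at level $i-1$. The relational structure $\mathcal{S}(\phi)$: its domain has one element for every occurrence of a clause in $\phi$, one element for every occurrence of a literal of the form $\Box$clause or $\Diamond$CNF, and one element for every propositional variable of $\phi$ (all occurrences of a variable share this element); there are no elements for $\bot$. Binary relations: $\overline{Oc}(e_1,e_2)$ iff $e_1$ represents a clause and $e_2$ a propositional variable occurring negated as a literal of that clause. $Oc(e_1,e_2)$ iff either $e_1$ represents a clause and $e_2$ represents a literal of that clause of the form $\Box$clause, $\Diamond$CNF or a non-negated variable; or $e_1$ represents a literal $\Box$clause and $e_2$ represents that clause; or $e_1$ represents a literal $\Diamond$CNF and $e_2$ represents a clause of that CNF. Unary relations: $Cl$ (elements representing clauses), $Lt$ (elements representing literals, including variables), $U$ (literals of the form $\Box\bot$), $B_\Box$ (literals of the form $\Box$clause), $D_\Diamond$ (literals of the form $\Diamond$CNF), and $Lv_j$ for $0\le j\le\mathrm{md}(\phi)$ (clauses and literals at level $j$). For a set $C$ of clause elements, $\mathrm{CNF}(C)$ denotes the conjunction of the clauses represented by elements of $C$. *)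

From HB Require Import structures.
From mathcomp Require Import all_boot.

Set Implicit Arguments.
Unset Strict Implicit.
Unset Printing Implicit Defensive.

Inductive form : Type :=
| FVar of nat
| FBot
| FNeg of form
| FOr of form & form
| FDia of form
| FBox of form.

Definition FAnd (a b : form) : form := FNeg (FOr (FNeg a) (FNeg b)).
Definition FTop : form := FNeg FBot.

Fixpoint md (f : form) : nat :=
  match f with
  | FVar _ | FBot => 0
  | FNeg g => md g
  | FOr g h => maxn (md g) (md h)
  | FDia g | FBox g => (md g).+1
  end.

Fixpoint holds (W : Type) (R : W -> W -> Prop) (V : nat -> W -> Prop)
    (w : W) (f : form) : Prop :=
  match f with
  | FVar q => V q w
  | FBot => False
  | FNeg g => ~ holds R V w g
  | FOr g h => holds R V w g \/ holds R V w h
  | FDia g => exists v, R w v /\ holds R V v g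
  | FBox g => forall v, R w v -> holds R V v g
  end.

Definition satisfiable (f : form) : Prop :=
  exists (W : Type) (R : W -> W -> Prop) (V : nat -> W -> Prop) (w : W),
    holds R V w f.

(* A clause is the list of its literals (disjuncts); the empty clause is bot
   (only allowed directly under Box, see [wf_cnf]). *)
Inductive lit : Type :=
| LPos of nat
| LNeg of nat
| LBox of seq lit
| LDia of seq (seq lit).

Definition clause := seq lit.
Definition cnf := seq clause.

Fixpoint disj (fs : seq form) : form :=
  match fs with
  | [::] => FBot
  | [:: f] => f
  | f :: fs' => FOr f (disj fs')
  end.

Fixpoint conj (fs : seq form) : form :=
  match fs with
  | [::] => FTop
  | [:: f] => f
  | f :: fs' => FAnd f (conj fs')
  end.

Fixpoint tr_lit (l : lit) : form :=
  match l with
  | LPos q => FVar q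
  | LNeg q => FNeg (FVar q)
  | LBox c => FBox (disj (map tr_lit c))
  | LDia f => FDia (conj (map (fun c => disj (map tr_lit c)) f))
  end.

Definition tr_clause (c : clause) : form := disj (map tr_lit c).
Definition tr_cnf (f : cnf) : form := conj (map tr_clause f).

Definition md_cnf (phi : cnf) : nat := md (tr_cnf phi).

(* Positions (occurrences) inside a CNF are addressed by paths of indices:
   a top clause is [:: k]; literal j of the clause at path p is [rcons p j];
   the clause of a Box literal at path r is [rcons r 0]; clause k of the CNF
   of a Dia literal at path r is [rcons r k].  Along the path we count the
   number of modal operators entered (the nesting depth). *)
Inductive obj : Type :=
| OCnf of cnf
| OCl of clause
| OLit of lit.

Definition step (o : obj) (k : nat) : option (obj * nat) :=
  match o with
  | OCnf f => if k < size f then Some (OCl (nth [::] f k), 0) else None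
  | OCl c => if k < size c then Some (OLit (nth (LPos 0) c k), 0) else None
  | OLit (LBox c) =>
      (* Box bot: the bot has no element *)
      if c is [::] then None else if k == 0 then Some (OCl c, 1) else None
  | OLit (LDia f) => if k < size f then Some (OCl (nth [::] f k), 1) else None
  | OLit _ => None
  end.

Fixpoint at_path (o : obj) (p : seq nat) : option (obj * nat) :=
  match p with
  | [::] => Some (o, 0)
  | k :: p' =>
      match step o k with
      | Some (o', d) =>
          match at_path o' p' with
          | Some (o'', d') => Some (o'', d + d')
          | None => None
          end
      | None => None
      end
  end.

Definition occ (phi : cnf) (p : seq nat) := at_path (OCnf phi) p.

(* Well-formed modal CNF: nonempty conjunctions, nonempty clauses, except that
   bot may occur (only) as the clause of Box bot. *)
Definition wf_cnf (phi : cnf) : Prop :=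
  phi <> [::] /\
  (forall p c d, occ phi p = Some (OCl c, d) -> c <> [::]) /\
  (forall p f d, occ phi p = Some (OLit (LDia f), d) -> f <> [::]).

Inductive node : Type :=
| NCl of seq nat
| NLt of seq nat
| NVar of nat.

Definition node_enc (e : node) : (seq nat + seq nat) + nat :=
  match e with
  | NCl p => inl (inl p)
  | NLt p => inl (inr p)
  | NVar q => inr q
  end.
Definition node_dec (x : (seq nat + seq nat) + nat) : node :=
  match x with
  | inl (inl p) => NCl p
  | inl (inr p) => NLt p
  | inr q => NVar q
  end.
Lemma node_encK : cancel node_enc node_dec. Proof. by case. Qed.
HB.instance Definition _ := Equality.copy node (can_type node_encK).

Section Structure.
Variable phi : cnf.

Definition is_cl (p : seq nat) : Prop :=
  exists c d, occ phi p = Some (OCl c, d).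
Definition is_box (r : seq nat) : Prop :=
  exists c d, occ phi r = Some (OLit (LBox c), d).
Definition is_dia (r : seq nat) : Prop :=
  exists f d, occ phi r = Some (OLit (LDia f), d).
Definition is_mlit (r : seq nat) : Prop := is_box r \/ is_dia r.
Definition occurs_var (q : nat) : Prop :=
  exists p d, occ phi p = Some (OLit (LPos q), d) \/
              occ phi p = Some (OLit (LNeg q), d).

Definition in_dom (e : node) : Prop :=
  match e with
  | NCl p => is_cl p
  | NLt r => is_mlit r
  | NVar q => occurs_var q
  end.

Definition relCl (e : node) : Prop :=
  if e is NCl p then is_cl p else False.
Definition relLt (e : node) : Prop :=
  match e with
  | NCl _ => False
  | NLt r => is_mlit r
  | NVar q => occurs_var q
  end.
Definition relU (e : node) : Prop :=
  if e is NLt r then exists d, occ phi r = Some (OLit (LBox [::]), d) else False.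
Definition relB (e : node) : Prop :=
  if e is NLt r then is_box r else False.
Definition relD (e : node) : Prop :=
  if e is NLt r then is_dia r else False.
Definition relLv (j : nat) (e : node) : Prop :=
  match e with
  | NCl p => exists c d, occ phi p = Some (OCl c, d) /\ j = md_cnf phi - d
  | NLt r => is_mlit r /\ exists o d, occ phi r = Some (o, d) /\ j = md_cnf phi - d
  | NVar q => exists p d, (occ phi p = Some (OLit (LPos q), d) \/
                          occ phi p = Some (OLit (LNeg q), d)) /\
                         j = md_cnf phi - d
  end.

Definition relOc (e1 e2 : node) : Prop :=
  (exists p j, e1 = NCl p /\ e2 = NLt (rcons p j) /\ is_cl p /\ is_mlit (rcons p j))
  \/ (exists p j q d, e1 = NCl p /\ e2 = NVar q /\ is_cl p /\
        occ phi (rcons p j) = Some (OLit (LPos q), d))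
  \/ (exists r k, e1 = NLt r /\ e2 = NCl (rcons r k) /\ is_mlit r /\ is_cl (rcons r k)).

Definition relOcBar (e1 e2 : node) : Prop :=
  exists p j q d, e1 = NCl p /\ e2 = NVar q /\ is_cl p /\
    occ phi (rcons p j) = Some (OLit (LNeg q), d).

Definition clause_of (e : node) : clause :=
  if e is NCl p then
    (if occ phi p is Some (OCl c, _) then c else [::])
  else [::].

Definition CNF_of (C : seq node) : form :=
  conj (map (fun e => tr_clause (clause_of e)) C).

End Structure.

Inductive usym : Type := SCl | SLt | SU | SBox | SDia | SLv of nat.
Inductive bsym : Type := SOc | SOcBar.

Inductive mso : Type :=
| MRel1 of usym & nat
| MRel2 of bsym & nat & nat
| MEq of nat & nat
| MIn of nat & nat            (* MIn x X : x \in X *)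
| MNeg of mso
| MOr of mso & mso
| MEx of nat & mso
| MExS of nat & mso.

(* length = number of symbols (each atom counts as one symbol) *)
Fixpoint mso_len (f : mso) : nat :=
  match f with
  | MRel1 _ _ | MRel2 _ _ _ | MEq _ _ | MIn _ _ => 1
  | MNeg g => (mso_len g).+1
  | MOr g h => (mso_len g + mso_len h).+1
  | MEx _ g | MExS _ g => (mso_len g).+1
  end.

Fixpoint fv1 (f : mso) : seq nat :=
  match f with
  | MRel1 _ x => [:: x]
  | MRel2 _ x y => [:: x; y]
  | MEq x y => [:: x; y]
  | MIn x _ => [:: x]
  | MNeg g => fv1 g
  | MOr g h => fv1 g ++ fv1 h
  | MEx x g => [seq y <- fv1 g | y != x]
  | MExS _ g => fv1 g
  end.

Fixpoint fv2 (f : mso) : seq nat :=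
  match f with
  | MIn _ X => [:: X]
  | MRel1 _ _ | MRel2 _ _ _ | MEq _ _ => [::]
  | MNeg g => fv2 g
  | MOr g h => fv2 g ++ fv2 h
  | MEx _ g => fv2 g
  | MExS X g => [seq Y <- fv2 g | Y != X]
  end.

Definition only_free_X (f : mso) : Prop :=
  fv1 f = [::] /\ all (fun Y => Y == 0) (fv2 f).

Record rstruct := RStruct {
  carrier : Type;
  dom : carrier -> Prop;
  interp1 : usym -> carrier -> Prop;
  interp2 : bsym -> carrier -> carrier -> Prop
}.

Definition upd (A : Type) (e : nat -> A) (x : nat) (v : A) : nat -> A :=
  fun y => if y == x then v else e y.

Fixpoint msat (M : rstruct) (e1 : nat -> option (carrier M))
    (e2 : nat -> carrier M -> Prop) (f : mso) : Prop :=
  match f with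
  | MRel1 P x => exists a, e1 x = Some a /\ @interp1 M P a
  | MRel2 R x y => exists a b, e1 x = Some a /\ e1 y = Some b /\ @interp2 M R a b
  | MEq x y => exists a b, e1 x = Some a /\ e1 y = Some b /\ a = b
  | MIn x X => exists a, e1 x = Some a /\ e2 X a
  | MNeg g => ~ @msat M e1 e2 g
  | MOr g h => @msat M e1 e2 g \/ @msat M e1 e2 h
  | MEx x g => exists a, @dom M a /\ @msat M (upd e1 x (Some a)) e2 g
  | MExS X g => exists S : carrier M -> Prop,
                  (forall a, S a -> @dom M a) /\ @msat M e1 (upd e2 X S) g
  end.

Definition S_of (phi : cnf) : rstruct :=
  {| carrier := node;
     dom := in_dom phi;
     interp1 := fun P => match P with
                         | SCl => relCl phi
                         | SLt => relLt phi
                         | SU => relU phi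
                         | SBox => relB phi
                         | SDia => relD phi
                         | SLv j => relLv phi j
                         end;
     interp2 := fun R => match R with
                         | SOc => relOc phi
                         | SOcBar => relOcBar phi
                         end |}.

Definition models_with (phi : cnf) (xi : mso) (C : seq node) : Prop :=
  @msat (S_of phi) (fun _ => None)
       (fun X => if X == 0 then (fun e : node => is_true (e \in C)) else (fun _ : node => False)) xi.

From Pilot Require Import Defs.
From HB Require Import structures.
From mathcomp Require Import all_boot.
From Stdlib Require Import Classical ClassicalEpsilon.
Import Defs.

Set Implicit Arguments.
Unset Strict Implicit.
Unset Printing Implicit Defensive.

(* At a world, [xi i X] guesses the set Y of true literal and
   variable elements and the set N of false variables: every clause of X has
   an Oc-witness in Y or an OcBar-witness in N, Y and N are disjoint, and no
   Box bot is true when some Diamond is.  For every true Diamond literal, the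
   clauses of its CNF together with the clauses of all true Box literals are
   the clauses of a successor world, and must satisfy [xi (i - 1)]; for i = 0
   no Diamond may be true, which is harmless since level-0 clauses contain no
   modal literal.  Each step adds a formula of fixed size, whence the linear
   bound.  Conversely Y and N are read off a model, and a model is built from
   the guesses by gluing the successor models recursively below a new root. *)

Section KripkeSemantics.
Variables (W : Type) (R : W -> W -> Prop) (V : nat -> W -> Prop).

Lemma holds_FAnd w a b : holds R V w (FAnd a b) <-> holds R V w a /\ holds R V w b.
Proof. by rewrite /=; split=> [H|]; [split; apply: NNPP; tauto | tauto]. Qed.

Lemma holds_disj A (x0 : A) (F : A -> form) (s : seq A) w :
  holds R V w (disj (map F s)) <->
  exists2 j, j < size s & holds R V w (F (nth x0 s j)).
Proof.
elim: s => [|a [|b s] IH]; first by split=> // -[].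
  by split=> [|[[|j]]] //; exists 0.
change (holds R V w (F a) \/ holds R V w (disj (map F (b :: s))) <->
  exists2 j, j < (size s).+2 & holds R V w (F (nth x0 [:: a, b & s] j))).
rewrite IH; split.
  by case=> [|[j]]; [exists 0 | exists j.+1].
by case=> [[|j]] /=; [left | right; exists j].
Qed.

Lemma holds_conj A (x0 : A) (F : A -> form) (s : seq A) w :
  holds R V w (conj (map F s)) <->
  forall j, j < size s -> holds R V w (F (nth x0 s j)).
Proof.
elim: s => [|a [|b s] IH]; first by split=> [_ j|_ []].
  by split=> [H [|j]|H] //; apply: (H 0).
change (holds R V w (FAnd (F a) (conj (map F (b :: s)))) <->
  forall j, j < (size s).+2 -> holds R V w (F (nth x0 [:: a, b & s] j))).
rewrite holds_FAnd IH; split=> [[Ha Hs] [|j] Hj|H] //; first exact: Hs.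
by split=> [|j Hj]; [apply: (H 0) | apply: (H j.+1)].
Qed.

End KripkeSemantics.

Lemma at_path_rcons o p j :
  at_path o (rcons p j) =
  if at_path o p is Some (o', d) then
    if step o' j is Some (o'', d') then Some (o'', d + d') else None
  else None.
Proof.
elim: p o => [|k p IH] o /=; first by case: (step o j) => [[o' d]|] //; rewrite addn0.
case: (step o k) => [[o' d]|] //; rewrite IH.
case: (at_path o' p) => [[o'' d']|] //.
by case: (step o'' j) => [[o3 d3]|] //; rewrite addnA.
Qed.

Lemma occ_rcons phi p j o d o' d' :
  occ phi p = Some (o, d) -> step o j = Some (o', d') ->
  occ phi (rcons p j) = Some (o', d + d').
Proof. by rewrite /occ at_path_rcons => -> ->. Qed.

Lemma occ_rcons_step phi p j o d o' d' :
  occ phi p = Some (o, d) -> occ phi (rcons p j) = Some (o', d') ->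
  exists2 d2, step o j = Some (o', d2) & d' = d + d2.
Proof.
rewrite /occ at_path_rcons => ->.
by case: (step o j) => [[o'' d2]|] // [<- <-]; exists d2.
Qed.

Lemma step_cl c j o d : step (OCl c) j = Some (o, d) ->
  [/\ j < size c, o = OLit (nth (LPos 0) c j) & d = 0].
Proof. by rewrite /=; case: ifP => // Hj [<- <-]. Qed.

Lemma step_box c k o d : step (OLit (LBox c)) k = Some (o, d) -> o = OCl c /\ d = 1.
Proof. by case: c => //= l c; case: ifP => // _ [<- <-]. Qed.

Lemma step_dia f k o d : step (OLit (LDia f)) k = Some (o, d) ->
  [/\ k < size f, o = OCl (nth [::] f k) & d = 1].
Proof. by rewrite /=; case: ifP => // Hk [<- <-]. Qed.

Lemma step_lit l k o d : step (OLit l) k = Some (o, d) -> d = 1.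
Proof. by case: l => // [c /step_box[]|f /step_dia[]]. Qed.

Definition md_obj (o : obj) : nat :=
  match o with
  | OCnf f => md (tr_cnf f)
  | OCl c => md (tr_clause c)
  | OLit l => md (tr_lit l)
  end.

Lemma md_nth_conj (s : seq form) j : j < size s -> md (nth FBot s j) <= md (conj s).
Proof.
elim: s j => [|a [|b s] IH] [|j] //= Hj; first exact: leq_maxl.
exact: leq_trans (IH j Hj) (leq_maxr _ _).
Qed.

Lemma md_nth_disj (s : seq form) j : j < size s -> md (nth FBot s j) <= md (disj s).
Proof.
elim: s j => [|a [|b s] IH] [|j] //= Hj; first exact: leq_maxl.
exact: leq_trans (IH j Hj) (leq_maxr _ _).
Qed.

Lemma step_md o k o' d : step o k = Some (o', d) -> d + md_obj o' <= md_obj o.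
Proof.
case: o => [f|c|[q|q|c|f]] //=.
- case: ifP => // Hk [<- <-]; rewrite add0n /tr_cnf.
  by have := @md_nth_conj (map tr_clause f) k; rewrite size_map (nth_map [::]) //; apply.
- case: ifP => // Hk [<- <-]; rewrite add0n /tr_clause.
  by have := @md_nth_disj (map tr_lit c) k; rewrite size_map (nth_map (LPos 0)) //; apply.
- by case: c => // l c; case: ifP => // _ [<- <-].
- case: ifP => // Hk [<- <-] /=.
  by have := @md_nth_conj (map tr_clause f) k; rewrite size_map (nth_map [::]) //; apply.
Qed.

Lemma at_path_md o p o' d : at_path o p = Some (o', d) -> d + md_obj o' <= md_obj o.
Proof.
elim: p o o' d => [|k p IH] o o' d /=; first by case=> <- <-.
case Ho1: (step o k) => [[o1 d1]|] //.
case Ho2: (at_path o1 p) => [[o2 d2]|] // [<- <-].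
rewrite -addnA; apply: leq_trans (step_md Ho1).
by rewrite leq_add2l; apply: IH.
Qed.

Lemma dia_depth phi r f d : occ phi r = Some (OLit (LDia f), d) -> d < md_cnf phi.
Proof. by move/at_path_md; apply: leq_trans; rewrite /= addnS ltnS leq_addr. Qed.

Definition MAnd (a b : mso) : mso := MNeg (MOr (MNeg a) (MNeg b)).
Definition MImp (a b : mso) : mso := MOr (MNeg a) b.
Definition MIff (a b : mso) : mso := MAnd (MImp a b) (MImp b a).
Definition MAll (x : nat) (a : mso) : mso := MNeg (MEx x (MNeg a)).
Definition MAllS (X : nat) (a : mso) : mso := MNeg (MExS X (MNeg a)).

(* Set variable 0 is X (rebound to the successor clauses at every recursive
   step), 1 is Y and 2 is N; first-order variable 2 holds a true Diamond
   literal. *)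
Definition mso_witnessed : mso :=
  MAll 0 (MImp (MIn 0 0) (MEx 1 (MOr (MAnd (MRel2 SOc 0 1) (MIn 1 1))
                                     (MAnd (MRel2 SOcBar 0 1) (MIn 1 2))))).
Definition mso_consistent : mso := MAll 1 (MNeg (MAnd (MIn 1 1) (MIn 1 2))).
Definition mso_no_bot_under_dia : mso :=
  MAll 2 (MImp (MAnd (MIn 2 1) (MRel1 SDia 2))
               (MAll 3 (MImp (MIn 3 1) (MNeg (MRel1 SU 3))))).
Definition mso_forall_true_dia (r : mso) : mso :=
  MAll 2 (MImp (MAnd (MIn 2 1) (MRel1 SDia 2)) r).
Definition mso_successors : mso :=
  MAll 4 (MIff (MIn 4 0) (MOr (MRel2 SOc 2 4)
     (MEx 5 (MAnd (MIn 5 1) (MAnd (MRel1 SBox 5) (MRel2 SOc 5 4)))))).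

Definition mso_world (r : mso) : mso :=
  MExS 1 (MExS 2 (MAnd mso_witnessed (MAnd mso_consistent
    (MAnd mso_no_bot_under_dia (mso_forall_true_dia r))))).

Fixpoint xi (k : nat) : mso :=
  mso_world (if k is k'.+1 then MAllS 0 (MImp mso_successors (xi k'))
             else MNeg (MEq 2 2)).

Lemma mso_len_xi k : mso_len (xi k) = 76 + 120 * k.
Proof. by elim: k => [|k IH] //; rewrite mulnS addnCA -IH. Qed.

Lemma xi_only_free_X k : only_free_X (xi k).
Proof.
rewrite /only_free_X; suff [-> ->] : fv1 (xi k) = [::] /\ fv2 (xi k) = [:: 0] by [].
by elim: k => [|k [IH1 IH2]] //=; rewrite IH1 IH2.
Qed.

Section MsoConnectives.
Variables (M : rstruct) (e1 : nat -> option (carrier M)) (e2 : nat -> carrier M -> Prop).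

Lemma msat_and a b : msat e1 e2 (MAnd a b) <-> msat e1 e2 a /\ msat e1 e2 b.
Proof. by rewrite /MAnd /=; split=> [H|]; [split; apply: NNPP; tauto | tauto]. Qed.

Lemma msat_imp a b : msat e1 e2 (MImp a b) <-> (msat e1 e2 a -> msat e1 e2 b).
Proof. by rewrite /MImp /=; split=> [|H]; [tauto | apply: NNPP; tauto]. Qed.

Lemma msat_iff a b : msat e1 e2 (MIff a b) <-> (msat e1 e2 a <-> msat e1 e2 b).
Proof. by rewrite /MIff msat_and !msat_imp. Qed.

Lemma msat_all x a :
  msat e1 e2 (MAll x a) <-> forall v, dom v -> msat (upd e1 x (Some v)) e2 a.
Proof.
rewrite /MAll /=; split=> [H v Hv|H [v [Hv Hna]]]; last exact: Hna (H v Hv).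
by apply: NNPP => Ha; apply: H; exists v.
Qed.

Lemma msat_allS X a :
  msat e1 e2 (MAllS X a) <->
  forall S, (forall v, S v -> dom v) -> msat e1 (upd e2 X S) a.
Proof.
rewrite /MAllS /=; split=> [H S HS|H [S [HS Hna]]]; last exact: Hna (H S HS).
by apply: NNPP => Ha; apply: H; exists S.
Qed.

End MsoConnectives.

(* From now on [/=] must not unfold the derived connectives, so that the
   lemmas above keep applying. *)
Opaque MAnd MImp MIff MAll MAllS.

Lemma ex_some A (a : A) (P : A -> Prop) : (exists b, Some a = Some b /\ P b) <-> P a.
Proof. by split=> [[b [[->]]]|Ha] //; exists a. Qed.

Lemma ex_some2 A (a a' : A) (P : A -> A -> Prop) :
  (exists b b', Some a = Some b /\ Some a' = Some b' /\ P b b') <-> P a a'.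
Proof. by split=> [[b [b' [[->] [[->]]]]]|Ha] //; exists a, a'. Qed.

Section WorldConditions.
Variable phi : cnf.
Implicit Types (X Y N Z : node -> Prop) (a b c d : node).

Definition dom_subset X : Prop := forall a, X a -> in_dom phi a.

Definition witnessed X Y N : Prop := forall a, in_dom phi a -> X a ->
  exists b, in_dom phi b /\ (relOc phi a b /\ Y b \/ relOcBar phi a b /\ N b).

Definition consistent Y N : Prop := forall b, in_dom phi b -> ~ (Y b /\ N b).

Definition no_bot_under_dia Y : Prop := forall d, in_dom phi d -> Y d /\ relD phi d ->
  forall u, in_dom phi u -> Y u -> ~ relU phi u.

Definition successor_clause Y d c : Prop := relOc phi d c \/
  exists b, in_dom phi b /\ (Y b /\ (relB phi b /\ relOc phi b c)).

Fixpoint xi_sem (k : nat) X : Prop :=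
  exists Y, dom_subset Y /\ exists N, dom_subset N /\
  (witnessed X Y N /\ (consistent Y N /\ (no_bot_under_dia Y /\
   forall d, in_dom phi d -> Y d /\ relD phi d ->
     if k is k'.+1 then
       forall Z, dom_subset Z ->
         (forall c, in_dom phi c -> (Z c <-> successor_clause Y d c)) -> xi_sem k' Z
     else False))).

Local Notation msat := (@msat (S_of phi)).
Section Components.
Variables (e1 : nat -> option node) (e2 : nat -> node -> Prop).

Lemma msat_witnessed :
  msat e1 e2 mso_witnessed <-> witnessed (e2 0) (e2 1) (e2 2).
Proof.
rewrite /mso_witnessed msat_all; split=> H a Ha; move: (H a Ha);
  rewrite msat_imp /= /upd /= ex_some => Hw Xa; case: (Hw Xa) => b [Hb Hab];
  by exists b; split=> //; move: Hab; rewrite !msat_and /= !ex_some2 !ex_some.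
Qed.

Lemma msat_consistent : msat e1 e2 mso_consistent <-> consistent (e2 1) (e2 2).
Proof.
by rewrite /mso_consistent msat_all; split=> H b Hb; move: (H b Hb);
  rewrite /= msat_and /= /upd /= !ex_some.
Qed.

Lemma msat_no_bot_under_dia :
  msat e1 e2 mso_no_bot_under_dia <-> no_bot_under_dia (e2 1).
Proof.
rewrite /mso_no_bot_under_dia msat_all; split=> H d Hd; move: (H d Hd);
  rewrite msat_imp msat_and msat_all /= /upd /= !ex_some => Hu Yd u Hu'; move: (Hu Yd u Hu');
  by rewrite msat_imp /= !ex_some.
Qed.

Lemma msat_forall_true_dia r :
  msat e1 e2 (mso_forall_true_dia r) <->
  forall d, in_dom phi d -> e2 1 d /\ relD phi d -> msat (upd e1 2 (Some d)) e2 r.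
Proof.
by rewrite /mso_forall_true_dia msat_all; split=> H d Hd; move: (H d Hd);
  rewrite msat_imp msat_and /= /upd /= !ex_some.
Qed.

Lemma msat_successors d :
  msat (upd e1 2 (Some d)) e2 mso_successors <->
  forall c, in_dom phi c -> (e2 0 c <-> successor_clause (e2 1) d c).
Proof.
have Hsucc c : msat (upd (upd e1 2 (Some d)) 4 (Some c)) e2
    (MOr (MRel2 SOc 2 4) (MEx 5 (MAnd (MIn 5 1) (MAnd (MRel1 SBox 5) (MRel2 SOc 5 4)))))
    <-> successor_clause (e2 1) d c.
  rewrite /= ex_some2; apply: or_iff_compat_l.
  by split=> -[b [Hb Hbc]]; exists b; split=> //; move: Hbc;
    rewrite !msat_and /= !ex_some !ex_some2.
rewrite /mso_successors msat_all.
by split=> H c Hc; move: (H c Hc); rewrite msat_iff Hsucc /= ex_some.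
Qed.

End Components.

Lemma msat_world e1 e2 r :
  msat e1 e2 (mso_world r) <->
  exists Y, dom_subset Y /\ exists N, dom_subset N /\
  (witnessed (e2 0) Y N /\ (consistent Y N /\ (no_bot_under_dia Y /\
   forall d, in_dom phi d -> Y d /\ relD phi d ->
     msat (upd e1 2 (Some d)) (upd (upd e2 1 Y) 2 N) r))).
Proof.
rewrite /mso_world /=; split=> -[Y [HY [N [HN H]]]]; exists Y; split=> //;
  exists N; split=> //; move: H;
  by rewrite !msat_and msat_witnessed msat_consistent msat_no_bot_under_dia
    msat_forall_true_dia.
Qed.

Lemma msat_xi k e1 e2 : msat e1 e2 (xi k) <-> xi_sem k (e2 0).
Proof.
elim: k e1 e2 => [|k IH] e1 e2; rewrite msat_world;
  split=> -[Y [HY [N [HN [Hw [Hc [Hb Hd]]]]]]]; exists Y; split=> //;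
  exists N; do 4 split=> //; move=> d Hd' HYd; move: (Hd d Hd' HYd).
- by rewrite /= ex_some2.
- by [].
- rewrite msat_allS => H Z HZ HZd; move: (H Z HZ).
  by rewrite msat_imp IH msat_successors; apply.
- move=> H; rewrite msat_allS => Z HZ; rewrite msat_imp IH msat_successors.
  exact: H.
Qed.

End WorldConditions.

Section Occurrences.
Variable phi : cnf.

Definition clauses_hold W (R : W -> W -> Prop) (V : nat -> W -> Prop) (w : W)
    (X : node -> Prop) : Prop :=
  forall p c d, X (NCl p) -> occ phi p = Some (OCl c, d) -> holds R V w (tr_clause c).

Definition clauses_at_level_le (k : nat) (X : node -> Prop) : Prop :=
  forall e, X e ->
    exists p c d, e = NCl p /\ occ phi p = Some (OCl c, d) /\ md_cnf phi <= d + k.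

Lemma occ_clause_lit p c d j l d' :
  occ phi p = Some (OCl c, d) -> occ phi (rcons p j) = Some (OLit l, d') ->
  j < size c /\ nth (LPos 0) c j = l.
Proof. by move=> Hp /(occ_rcons_step Hp) [d2 /step_cl [Hj [->] _] _]. Qed.

Lemma relOc_cl p b : relOc phi (NCl p) b ->
  (exists j, b = NLt (rcons p j) /\ is_mlit phi (rcons p j)) \/
  (exists j q d, b = NVar q /\ occ phi (rcons p j) = Some (OLit (LPos q), d)).
Proof.
case=> [[p0 [j [[<-] [-> [_ H]]]]]|[[p0 [j [q [d [[<-] [-> [_ H]]]]]]]|[r [k []]]]] //.
  by left; exists j.
by right; exists j, q, d.
Qed.

Lemma relOcBar_cl p b : relOcBar phi (NCl p) b ->
  exists j q d, b = NVar q /\ occ phi (rcons p j) = Some (OLit (LNeg q), d).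
Proof. by case=> p0 [j [q [d [[<-] [-> [_ H]]]]]]; exists j, q, d. Qed.

Lemma relOc_lt r e : relOc phi (NLt r) e ->
  exists k c d, e = NCl (rcons r k) /\ occ phi (rcons r k) = Some (OCl c, d).
Proof.
case=> [[p [j []]]|[[p [j [q [d []]]]]|[r0 [k [[<-] [-> [_ [c [d H]]]]]]]]] //.
by exists k, c, d.
Qed.

Lemma clauses_at_level_le_child k X p j l d k0 o d' :
  clauses_at_level_le k.+1 X -> X (NCl p) ->
  occ phi (rcons p j) = Some (OLit l, d) ->
  occ phi (rcons (rcons p j) k0) = Some (o, d') -> md_cnf phi <= d' + k.
Proof.
move=> HX Xp Hl Ho; case: (HX _ Xp) => _ [c [dp [[<-] [Hp Hmd]]]].
have [d1 /step_cl [_ _ ->] Ed] := occ_rcons_step Hp Hl.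
have [d2 /step_lit -> ->] := occ_rcons_step Hl Ho.
by rewrite Ed addn0 addn1 addSnnS.
Qed.

End Occurrences.

Section Completeness.
Variables (phi : cnf) (W : Type) (R : W -> W -> Prop) (V : nat -> W -> Prop).

Definition true_at (X : node -> Prop) (w : W) (a : node) : Prop :=
  in_dom phi a /\
  match a with
  | NVar q => V q w
  | NLt r => exists p j l d, r = rcons p j /\ X (NCl p) /\
               occ phi r = Some (OLit l, d) /\ holds R V w (tr_lit l)
  | NCl _ => False
  end.

Definition false_at (w : W) (a : node) : Prop :=
  in_dom phi a /\ if a is NVar q then ~ V q w else False.

Lemma true_false_consistent X w : consistent phi (true_at X w) (false_at w).
Proof. by case=> [p|r|q] _ [[_ Ht] [_ Hf]]. Qed.

Lemma true_at_no_bot_under_dia X w : no_bot_under_dia phi (true_at X w).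
Proof.
move=> [p|r|q] _ [[_ Yr] Dr] //; case: Yr => p [j [l [d [_ [_ [Hr Hl]]]]]].
case: Dr => f [d' Hf] [p'|r'|q'] _ [_ Yr'] // [d2 Hu].
case: Yr' => p1 [j1 [l' [d1 [_ [_ [Hr' Hl']]]]]].
move: Hl Hl'; rewrite Hr in Hf; rewrite Hr' in Hu; case: Hf => -> _; case: Hu => -> _.
by case=> v [Rwv _] /(_ v Rwv).
Qed.

Lemma true_at_witnessed k X w :
  clauses_at_level_le phi k X -> clauses_hold phi R V w X ->
  witnessed phi X (true_at X w) (false_at w).
Proof.
move=> HX Htr a _ Xa; case: (HX a Xa) => p [c [d [Ea [Hp _]]]]; subst a.
have Hcl : is_cl phi p by exists c, d.
have := Htr _ _ _ Xa Hp; rewrite /tr_clause (holds_disj R V (LPos 0)) => -[j Hj Hl].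
have := occ_rcons Hp (_ : step (OCl c) j = Some (OLit (nth (LPos 0) c j), 0)).
rewrite /= Hj addn0 => /(_ erefl); move: Hl; case: (nth (LPos 0) c j) => [q|q|c'|f] Hl Hr.
- have Hq : in_dom phi (NVar q) by exists (rcons p j), d; left.
  by exists (NVar q); split=> //; left; split; [right; left; exists p, j, q, d|split].
- have Hq : in_dom phi (NVar q) by exists (rcons p j), d; right.
  by exists (NVar q); split=> //; right; split; [exists p, j, q, d|split].
- have Hm : is_mlit phi (rcons p j) by left; exists c', d.
  exists (NLt (rcons p j)); split=> //; left; split; first by left; exists p, j.
  by split=> //; exists p, j, (LBox c'), d.
- have Hm : is_mlit phi (rcons p j) by right; exists f, d.
  exists (NLt (rcons p j)); split=> //; left; split; first by left; exists p, j.
  by split=> //; exists p, j, (LDia f), d.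
Qed.

Lemma true_dia_successor_clause k X w r f d v e :
  clauses_at_level_le phi k.+1 X -> true_at X w (NLt r) ->
  occ phi r = Some (OLit (LDia f), d) -> R w v ->
  holds R V v (conj (map tr_clause f)) ->
  successor_clause phi (true_at X w) (NLt r) e ->
  exists p c d', e = NCl p /\ occ phi p = Some (OCl c, d') /\
    md_cnf phi <= d' + k /\ holds R V v (tr_clause c).
Proof.
move=> HX [_ [p [j [l [dr [Er [Xp [Hr _]]]]]]]] Hf Rwv Hv; subst r.
case=> [/relOc_lt [k0 [c [d' [-> Hc]]]]|].
  exists (rcons (rcons p j) k0), c, d'; do 2 split=> //.
  split; first exact: clauses_at_level_le_child HX Xp Hr Hc.
  have [d2 /step_dia [Hk [->] _] _] := occ_rcons_step Hf Hc.
  exact: (holds_conj R V [::] tr_clause f v).1 Hv k0 Hk.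
case=> -[pb|rb|qb] [_ [[_ Yb] [Bb Ob]]] //.
case: Yb Bb => p1 [j1 [l1 [d1 [Erb [Xp1 [Hr1 Hl1]]]]]] [cb [db Hb]].
subst rb; case/relOc_lt: Ob => k0 [c [d' [-> Hc]]].
exists (rcons (rcons p1 j1) k0), c, d'; do 2 split=> //.
split; first exact: clauses_at_level_le_child HX Xp1 Hr1 Hc.
move: Hl1; rewrite Hb in Hr1; case: Hr1 => <- _.
by have [d2 /step_box [[<-] _] _] := occ_rcons_step Hb Hc; apply.
Qed.

Lemma xi_sem_complete k X w :
  clauses_at_level_le phi k X -> clauses_hold phi R V w X -> xi_sem phi k X.
Proof.
elim: k X w => [|k IH] X w HX Htr; exists (true_at X w); split=> [a []//|].
all: exists (false_at w); split=> [a []//|].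
all: split; first exact: true_at_witnessed HX Htr.
all: split; first exact: true_false_consistent.
all: split; first exact: true_at_no_bot_under_dia.
all: move=> [p|r|q] _ [Yr Dr] //; try by case: Yr.
all: case: Dr => f [d Hf].
- case: Yr => _ [p [j [l [dr [Er [Xp [Hr _]]]]]]]; subst r.
  case: (HX _ Xp) => _ [c [dp [[<-] [Hp Hmd]]]].
  have [d1 /step_cl [_ _ ->] Ed] := occ_rcons_step Hp Hr.
  have := dia_depth Hf; rewrite Hr in Hf; case: Hf => _ <-.
  by rewrite Ed ltnNge Hmd.
- move=> Z HZ HZd.
  have [v [Rwv Hv]] : exists v, R w v /\ holds R V v (conj (map tr_clause f)).
    case: Yr => _ [p [j [l [dr [_ [_ [Hr Hl]]]]]]].
    by move: Hl; rewrite Hf in Hr; case: Hr => <-.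
  have HZs e : Z e -> exists p c d', e = NCl p /\ occ phi p = Some (OCl c, d') /\
      md_cnf phi <= d' + k /\ holds R V v (tr_clause c).
    move=> Ze; have He := HZ e Ze.
    exact: true_dia_successor_clause HX Yr Hf Rwv Hv ((HZd e He).1 Ze).
  apply: (IH Z v) => [e /HZs [p [c [d' [-> [Hp [Hmd _]]]]]]|p c d' /HZs].
    by exists p, c, d'.
  by move=> [p0 [c1 [d1 [[<-] [Hp [_ Hc]]]]]]; rewrite Hp => -[<-].
Qed.

End Completeness.

Section RootedSum.
Variables (I : Type) (succ : I -> Prop) (V0 : nat -> Prop)
  (Rm : I -> seq I -> seq I -> Prop) (Vm : I -> nat -> seq I -> Prop).

(* The models [(seq I, Rm i, Vm i)] side by side, world [w] of the [i]-th one
   renamed [i :: w], below a new root [[::]] whose successors are the roots of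
   the models with [succ i]. *)
Definition sum_rel (w v : seq I) : Prop :=
  (w = [::] /\ exists2 i, succ i & v = [:: i]) \/
  (exists i w0 v0, [/\ w = i :: w0, v = i :: v0 & Rm i w0 v0]).

Definition sum_val (q : nat) (w : seq I) : Prop :=
  if w is i :: w0 then Vm i q w0 else V0 q.

Lemma holds_sum_cons i w f : holds sum_rel sum_val (i :: w) f <-> holds (Rm i) (Vm i) w f.
Proof.
elim: f w => [q||g IH|g IHg h IHh|g IH|g IH] w //=; first by rewrite IH.
- by rewrite IHg IHh.
- split=> -[v [Rwv Hv]].
    case: Rwv Hv => [[//]|[i' [w' [v' [[<- <-] -> Rv]]]]] Hv.
    by exists v'; rewrite -IH.
  by exists (i :: v); split; [right; exists i, w, v | rewrite IH].
- split=> Hb v Rwv; last first.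
    by case: Rwv => [[//]|[i' [w' [v' [[<- <-] -> Rv]]]]]; rewrite IH; apply: Hb.
  by apply/IH/Hb; right; exists i, w, v.
Qed.

Lemma holds_sum_root_dia f :
  holds sum_rel sum_val [::] (FDia f) <-> exists2 i, succ i & holds (Rm i) (Vm i) [::] f.
Proof.
split=> [[v [[[_ [i Hi ->]]|[i [w [v' [//]]]]] Hv]]|[i Hi Hf]].
  by exists i; rewrite // -holds_sum_cons.
by exists [:: i]; split; [left; split; last exists i | rewrite holds_sum_cons].
Qed.

Lemma holds_sum_root_box f :
  holds sum_rel sum_val [::] (FBox f) <-> forall i, succ i -> holds (Rm i) (Vm i) [::] f.
Proof.
split=> [Hb i Hi|Hb v [[_ [i Hi ->]]|[i [w [v' [//]]]]]].
  by rewrite -holds_sum_cons; apply: Hb; left; split; last exists i.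
exact/holds_sum_cons/Hb.
Qed.

End RootedSum.

Section Soundness.
Variables (phi : cnf) (Y : node -> Prop)
  (Rm : node -> seq node -> seq node -> Prop) (Vm : node -> nat -> seq node -> Prop).

Definition true_dia (d : node) : Prop := in_dom phi d /\ Y d /\ relD phi d.
Definition successor_clauses (d c : node) : Prop := in_dom phi c /\ successor_clause phi Y d c.

Hypothesis successors_hold :
  forall d, true_dia d -> clauses_hold phi (Rm d) (Vm d) [::] (successor_clauses d).

Local Notation R0 := (sum_rel true_dia Rm).
Local Notation V0 := (sum_val (fun q => Y (NVar q)) Vm).

Lemma sum_holds_box r c d : no_bot_under_dia phi Y ->
  occ phi r = Some (OLit (LBox c), d) -> Y (NLt r) -> holds R0 V0 [::] (tr_lit (LBox c)).
Proof.
move=> Hbot Hr Yr; apply/holds_sum_root_box => d' Hd'.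
have Hbr : relB phi (NLt r) by exists c, d.
have Hdr : in_dom phi (NLt r) by left.
case: c Hr Hbr => [|l c] Hr Hbr.
  by case: (Hbot _ Hd'.1 Hd'.2 _ Hdr Yr); exists d.
have Hc := occ_rcons Hr (_ : step (OLit (LBox (l :: c))) 0 = Some (OCl (l :: c), 1)).
have Hcl : is_cl phi (rcons r 0) by exists (l :: c), (d + 1); apply: Hc.
apply: (successors_hold Hd' _ (Hc erefl)); split=> //.
by right; exists (NLt r); do 3 split=> //; right; right; exists r, 0.
Qed.

Lemma sum_holds_dia r f d :
  occ phi r = Some (OLit (LDia f), d) -> Y (NLt r) -> holds R0 V0 [::] (tr_lit (LDia f)).
Proof.
move=> Hr Yr; apply/holds_sum_root_dia.
have Hd : true_dia (NLt r) by split; [right|split=> //]; exists f, d.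
exists (NLt r) => //.
apply/(holds_conj _ _ [::] tr_clause) => k Hk.
have Hc := occ_rcons Hr (_ : step (OLit (LDia f)) k = Some (OCl (nth [::] f k), 1)).
have Hcl : is_cl phi (rcons r k) by exists (nth [::] f k), (d + 1); apply: Hc; rewrite /= Hk.
apply: (successors_hold Hd _ (Hc _)); last by rewrite /= Hk.
split=> //; left; right; right; exists r, k.
by do 3 split=> //; right; exists f, d.
Qed.

Lemma sum_clauses_hold X N :
  witnessed phi X Y N -> consistent phi Y N -> no_bot_under_dia phi Y ->
  clauses_hold phi R0 V0 [::] X.
Proof.
move=> Hw Hcons Hbot p c d Xp Hp; have Hdom : in_dom phi (NCl p) by exists c, d.
suff [j [l [d' [Hr Hl]]]] : exists j l d',
    occ phi (rcons p j) = Some (OLit l, d') /\ holds R0 V0 [::] (tr_lit l).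
  have [Hj Hn] := occ_clause_lit Hp Hr.
  by apply/(holds_disj _ _ (LPos 0)); exists j; rewrite // Hn.
case: (Hw _ Hdom Xp) => b [Hb [[Ob Yb]|[/relOcBar_cl [j [q [d' [Eb Hq]]]] Nb]]].
- case/relOc_cl: Ob => [[j [Eb [[c' [d' Hr]]|[f [d' Hr]]]]]|[j [q [d' [Eb Hq]]]]];
    subst b.
  + by exists j, (LBox c'), d'; split=> //; apply: sum_holds_box Hbot Hr Yb.
  + by exists j, (LDia f), d'; split=> //; apply: sum_holds_dia Hr Yb.
  + by exists j, (LPos q), d'.
- by subst b; exists j, (LNeg q), d'; split=> // Yq; apply: (Hcons _ Hb).
Qed.

End Soundness.

Lemma xi_sem_sound phi k X : xi_sem phi k X ->
  exists (R : seq node -> seq node -> Prop) (V : nat -> seq node -> Prop),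
    clauses_hold phi R V [::] X.
Proof.
elim: k X => [|k IH] X [Y [_ [N [_ [Hw [Hcons [Hbot Hsucc]]]]]]].
  exists (sum_rel (true_dia phi Y) (fun _ _ _ => False)).
  exists (sum_val (fun q => Y (NVar q)) (fun _ _ _ => False)).
  by apply: sum_clauses_hold Hw Hcons Hbot => d [Hd HYd]; case: (Hsucc d Hd HYd).
have Hsub d : exists RV : (seq node -> seq node -> Prop) * (nat -> seq node -> Prop),
    true_dia phi Y d -> clauses_hold phi RV.1 RV.2 [::] (successor_clauses phi Y d).
  case: (classic (true_dia phi Y d)) => [[Hd HYd]|Hnd]; last first.
    by exists (fun _ _ => False, fun _ _ => False).
  have Hz : xi_sem phi k (successor_clauses phi Y d).
    by apply: (Hsucc d Hd HYd) => c; [case | move=> Hc; split=> [[]|]].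
  by have [R [V HRV]] := IH _ Hz; exists (R, V).
have [RV HRV] := ClassicalEpsilon.choice _ Hsub.
exists (sum_rel (true_dia phi Y) (fun d => (RV d).1)).
exists (sum_val (fun q => Y (NVar q)) (fun d => (RV d).2)).
exact: sum_clauses_hold Hw Hcons Hbot.
Qed.

Lemma clause_level_le phi i e : relCl phi e -> relLv phi i e ->
  exists p c d, e = NCl p /\ occ phi p = Some (OCl c, d) /\ md_cnf phi <= d + i.
Proof.
by case: e => // p _ [c [d [Hp ->]]]; exists p, c, d; rewrite -leq_subLR.
Qed.

Lemma holds_CNF_of phi C W (R : W -> W -> Prop) V (w : W) :
  (forall e, e \in C -> relCl phi e) ->
  holds R V w (CNF_of phi C) <-> clauses_hold phi R V w (fun e => e \in C).
Proof.
move=> HC; rewrite /CNF_of (holds_conj R V (NVar 0)); split=> H.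
  move=> p c d /(nthP (NVar 0)) [j Hj Ej] Hp.
  by have := H j Hj; rewrite Ej /= Hp.
move=> j Hj; have Hin := mem_nth (NVar 0) Hj; have Hcl := HC _ Hin.
move: Hcl Hin; case: (nth (NVar 0) C j) => // p [c [d Hp]] Hin.
by rewrite /= Hp; apply: H Hin Hp.
Qed.

Theorem lemma1 :
  exists c : nat, forall i : nat, exists xi : mso,
    mso_len xi <= c * i.+1 /\ only_free_X xi /\
    forall phi : cnf, wf_cnf phi -> i <= md_cnf phi ->
    forall C : seq node,
      (forall e, e \in C -> relCl phi e /\ relLv phi i e) ->
      (satisfiable (CNF_of phi C) <-> models_with phi xi C).
Proof.
exists 120 => i; exists (xi i); split; first by rewrite mso_len_xi mulnS leq_add2r.
split; first exact: xi_only_free_X.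
move=> phi _ _ C HC; have HCl e : e \in C -> relCl phi e by case/HC.
rewrite /models_with msat_xi /=; split.
  case=> W [R [V [w]]]; rewrite holds_CNF_of // => Hw.
  by apply: xi_sem_complete Hw => e /HC []; apply: clause_level_le.
case/xi_sem_sound => R [V HRV]; exists (seq node), R, V, [::].
by rewrite holds_CNF_of.
Qed.
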